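(* Let $\mathbf{k}$ be an algebraically closed field of characteristic zero, $\mathcal{A}=\mathbf{k}[x_1,\ldots,x_n]$, $\mathcal{V}=\bigoplus_{i=1}^n\mathcal{A}\frac{\partial}{\partial x_i}$, $\mathcal{L}_+\subset\mathcal{V}$ the subalgebra of vector fields vanishing at the origin, and $\mathcal{D}$ the Weyl algebra. The map $\psi:\mathcal{D}\otimes U(\mathcal{L}_+)\to\mathcal{A}\# U(\mathcal{V})$ defined by $$\psi\left(x^r\partial^s\right)=x^r\#\left(\frac{\partial}{\partial x_1}\right)^{s_1}\cdots\left(\frac{\partial}{\partial x_n}\right)^{s_n}\ \text{on }\mathcal{D},\qquad \psi\left(x^m\frac{\partial}{\partial x_p}\right)=\sum_{0\leq k\leq m}(-1)^{m-k}\binom{m}{k}x^{m-k}\# x^k\frac{\partial}{\partial x_p}\ \text{on }\mathcal{L}_+\ (m\ne0),$$ extends to a (well-defined) homomorphism of associative algebras.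
   Context: Multi-index notation: $x^r=x_1^{r_1}\cdots x_n^{r_n}$, $\partial^s=(\partial/\partial x_1)^{s_1}\cdots(\partial/\partial x_n)^{s_n}$; $k\le m$ componentwise; $\binom{m}{k}=\prod_i\binom{m_i}{k_i}$; $(-1)^{s}=(-1)^{s_1+\cdots+s_n}$. $\mathcal{L}_+$ is spanned by $x^m\frac{\partial}{\partial x_p}$ with $m\ne 0$. The smash product $\mathcal{A}\# U(\mathcal{V})$ is $\mathcal{A}\otimes U(\mathcal{V})$ with product $(f\# u)(g\# v)=\sum_i f\,u_i^{(1)}(g)\# u_i^{(2)}v$ where $\Delta(u)=\sum_i u_i^{(1)}\otimes u_i^{(2)}$ is the coproduct; in particular $(1\#\eta)(f\#1)=f\#\eta+\eta(f)\#1$ for $\eta\in\mathcal{V}$, $f\in\mathcal{A}$. *)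

From HB Require Import structures.
From mathcomp Require Import all_boot all_order all_algebra.
From mathcomp Require Export mpoly.
Set Implicit Arguments. Unset Strict Implicit. Unset Printing Implicit Defensive.
Import Order.TTheory GRing.Theory Num.Theory.
Local Open Scope ring_scope.

Section Defs.
Variables (k : fieldType) (n : nat).

Notation A := {mpoly k[n]}.
(* V = (+)_i A d/dx_i : the vector field sum_i v i * d/dx_i is v. *)
Definition vfield := {ffun 'I_n -> A}.

Definition vact (v : vfield) (f : A) : A := \sum_(j < n) v j * f^`M(j).

Definition vbracket (u v : vfield) : vfield :=
  [ffun i => vact u (v i) - vact v (u i)].

Definition Lplus (v : vfield) : Prop := forall i, (v i)@_0%MM = 0.

Definition xd (m : 'X_{1..n}) (p : 'I_n) : vfield :=
  [ffun i => if i == p then 'X_[m] else 0].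

Definition dvec (p : 'I_n) : vfield := xd 0%MM p.

Definition mbinom (m l : 'X_{1..n}) : nat := \prod_(i < n) 'C(m i, l i).

Definition is_alg_hom (S T : algType k) (phi : S -> T) : Prop :=
  [/\ {morph phi : x y / x + y}, {morph phi : x y / x * y}, phi 1 = 1
    & forall (a : k) x, phi (a *: x) = a *: phi x].

(* Relations defining D (x) U(L_+): Weyl generators X_i, D_i, a Lie map   *)
(* j from L_+ (k-linear, brackets to commutators), and D commuting with   *)
(* the image of L_+.                                                      *)
Definition DUL_rel (B : algType k) (X Dd : 'I_n -> B) (j : vfield -> B) : Prop :=
  [/\ [/\ (forall i l, X i * X l = X l * X i),
      (forall i l, Dd i * Dd l = Dd l * Dd i)
    & (forall i l, Dd i * X l - X l * Dd i = (i == l)%:R)],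
      (forall (a : k) u v, Lplus u -> Lplus v ->
          j (a *: u + v) = a *: j u + j v),
      (forall u v, Lplus u -> Lplus v ->
          j (vbracket u v) = j u * j v - j v * j u),
      (forall i u, Lplus u -> X i * j u = j u * X i)
    & (forall i u, Lplus u -> Dd i * j u = j u * Dd i)].

(* (S, X, Dd, j) is (a model of) the algebra D (x) U(L_+), i.e. the        *)
(* universal k-algebra for the relations above (universal property of     *)
(* the Weyl algebra, of U(L_+), and of the tensor product of algebras).    *)
Definition is_DUL (S : algType k) (X Dd : 'I_n -> S) (j : vfield -> S) : Prop :=
  DUL_rel X Dd j /\
  forall (B : algType k) (X' Dd' : 'I_n -> B) (j' : vfield -> B),
    DUL_rel X' Dd' j' ->
    exists phi : S -> B,
      [/\ is_alg_hom phi,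
          (forall i, phi (X i) = X' i),
          (forall i, phi (Dd i) = Dd' i),
          (forall u, Lplus u -> phi (j u) = j' u)
        & forall psi : S -> B, is_alg_hom psi ->
            (forall i, psi (X i) = X' i) ->
            (forall i, psi (Dd i) = Dd' i) ->
            (forall u, Lplus u -> psi (j u) = j' u) ->
            forall s, psi s = phi s].

(* Relations defining the smash product A # U(V): iA : f |-> f # 1 is an *)
(* algebra map, iV : eta |-> 1 # eta a Lie map, and                        *)
(* (1 # eta)(f # 1) = f # eta + eta(f) # 1, where f # eta = (f#1)(1#eta). *)
Definition smash_rel (B : algType k) (iA : A -> B) (iV : vfield -> B) : Prop :=
  [/\ is_alg_hom iA,
      (forall (a : k) u v, iV (a *: u + v) = a *: iV u + iV v),
      (forall u v, iV (vbracket u v) = iV u * iV v - iV v * iV u)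
    & (forall eta f, iV eta * iA f = iA f * iV eta + iA (vact eta f))].

(* (T, iA, iV) is (a model of) the smash product A # U(V): the universal   *)
(* k-algebra for the relations above.                                      *)
Definition is_smash (T : algType k) (iA : A -> T) (iV : vfield -> T) : Prop :=
  smash_rel iA iV /\
  forall (B : algType k) (iA' : A -> B) (iV' : vfield -> B),
    smash_rel iA' iV' ->
    exists phi : T -> B,
      [/\ is_alg_hom phi,
          (forall f, phi (iA f) = iA' f),
          (forall u, phi (iV u) = iV' u)
        & forall psi : T -> B, is_alg_hom psi ->
            (forall f, psi (iA f) = iA' f) ->
            (forall u, psi (iV u) = iV' u) ->
            forall t, psi t = phi t].

Definition psiL (T : algType k) (iA : A -> T) (iV : vfield -> T)
    (m : 'X_{1..n}) (p : 'I_n) : T :=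
  \sum_(l : 'X_{1..n < (mdeg m).+1} | (bmnm l <= m)%MM)
     ((-1) ^+ mdeg (m - bmnm l)%MM * (mbinom m l)%:R) *:
        (iA 'X_[(m - bmnm l)%MM] * iV (xd l p)).

End Defs.

(* Let B = A[y_1, ..., y_n] be the polynomials in new variables y with
   coefficients in A = k[x_1, ..., x_n].  For a vector field u = sum_q u_q d_q
   set psi(u) = sum_q sum_l a_(q,l) # x^l d_q, where
   u_q(y - x) = sum_l a_(q,l)(x) y^l; on x^m d_p this is the formula of the
   statement, by the binomial expansion of (y - x)^m.  Moving a # x^l d_p past
   b # x^l' d_q in A # U(V) shows that the commutator of two such sums has the
   same shape, built from the y-derivatives of the two polynomials of B, the
   x-derivatives of their coefficients, and their values on the diagonal
   y = x.  For a polynomial f(y - x) the y-derivative is the shifted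
   x-derivative of f, the coefficientwise x-derivative is its opposite, and
   the diagonal value is the constant f(0).  Hence on L_+, where f(0) = 0,
   psi is a Lie map commuting with the x_i, and psi(u) commutes with every
   d_i; the universal property of D (x) U(L_+) then provides the algebra map. *)

From HB Require Import structures.
From mathcomp Require Import all_boot all_order all_algebra.
From mathcomp Require Import mpoly.
From mathcomp.multinomials Require Import ssrcomplements.
Set Implicit Arguments.
Unset Strict Implicit.
Import GRing.Theory.
Local Open Scope ring_scope.

Lemma sum_commutator (R : pzRingType) (I J : Type) (r : seq I) (s : seq J)
    (x : I -> R) (y : J -> R) :
  (\sum_(i <- r) x i) * (\sum_(j <- s) y j)
    - (\sum_(j <- s) y j) * (\sum_(i <- r) x i)
  = \sum_(i <- r) \sum_(j <- s) (x i * y j - y j * x i).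
Proof.
rewrite mulr_suml mulr_sumr -sumrB; apply: eq_bigr => i _.
by rewrite mulr_sumr mulr_suml -sumrB.
Qed.

Lemma prod_exprDn (R : comNzRingType) (n : nat) (z y : 'I_n -> R)
    (m : 'X_{1..n}) :
  \prod_(i < n) (z i + y i) ^+ m i =
  \sum_(l : 'X_{1..n < (mdeg m).+1} | (bmnm l <= m)%MM)
     \prod_(i < n) (z i ^+ (m i - l i) * y i ^+ l i *+ 'C(m i, l i)).
Proof.
set d := mdeg m.
pose G i (j : nat) := z i ^+ (m i - j) * y i ^+ j *+ 'C(m i, j).
have le_mdeg (l : 'X_{1..n}) i : (l i <= mdeg l)%N.
  by rewrite mdegE (bigD1 i) //= leq_addr.
under eq_bigr => i _ do
  rewrite exprDn (big_ord_widen d.+1 (G i)) ?ltnS ?le_mdeg //.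
rewrite bigA_distr_big_dep /=.
pose toF (l : 'X_{1..n < d.+1}) : {ffun 'I_n -> 'I_d.+1} :=
  [ffun i => inord (l i)].
pose toM (f : {ffun 'I_n -> 'I_d.+1}) : 'X_{1..n < d.+1} :=
  insubd bm0 (Multinom [tuple (f i : nat) | i < n]).
have toMK (f : {ffun 'I_n -> 'I_d.+1}) :
    f \in family (fun i (j : 'I_d.+1) => (j < (m i).+1)%N) ->
    bmnm (toM f) = Multinom [tuple (f i : nat) | i < n].
  move=> /familyP le_fm; rewrite /toM val_insubd ltnS.
  suff -> : (mdeg (Multinom [tuple (f i : nat) | i < n]) <= d)%N by [].
  rewrite mdegE (@leq_trans (\sum_i m i)) //; last by rewrite -mdegE.
  by apply: leq_sum => i _; rewrite mnmE -ltnS; apply: le_fm.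
have toFK l : (bmnm l <= m)%MM -> toM (toF l) = l.
  move=> _; apply: val_inj; rewrite /toM val_insubd.
  have -> : Multinom [tuple (toF l i : nat) | i < n] = l.
    apply/mnmP => i; rewrite mnmE ffunE inordK //.
    by rewrite (leq_ltn_trans (le_mdeg l i)) ?bmdeg.
  by rewrite bmdeg.
rewrite (reindex_onto toM toF) //=; apply: eq_big => f.
  apply/idP/andP => [fam | [/mnm_lepP le_m /eqP <-]].
    split; last by apply/eqP/ffunP => i; rewrite ffunE toMK // mnmE inord_val.
    by apply/mnm_lepP => i; rewrite toMK // mnmE -ltnS; apply: (familyP fam).
  apply/familyP => i; rewrite ffunE unfold_in /= inordK ?ltnS ?le_m //.
  by rewrite (leq_trans (le_mdeg _ i)) // -ltnS bmdeg.
by move=> fam; apply: eq_bigr => i _; rewrite toMK // mnmE.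
Qed.

Lemma mpoly_ind_alg (R : nzRingType) (n : nat) (P : {mpoly R[n]} -> Prop) :
  P 1 -> (forall i, P 'X_i) ->
  (forall c f, P f -> P (c *: f)) ->
  (forall f g, P f -> P g -> P (f + g)) ->
  (forall f g, P f -> P g -> P (f * g)) ->
  forall f, P f.
Proof.
move=> P1 PX PZ PD PM f.
have P0 : P 0 by rewrite -(scale0r 1); apply: PZ.
rewrite (mpolyE f); elim/big_ind: _ => // m _.
apply: PZ; rewrite mpolyXE_id; elim/big_ind: _ => // i _.
by elim: (m i) => [|e IH]; rewrite ?expr0 // exprS; apply: PM.
Qed.

Lemma mderivXU (R : nzRingType) (n : nat) (i j : 'I_n) :
  ('X_j : {mpoly R[n]})^`M(i) = (j == i)%:R.
Proof.
rewrite mderivX mnm1E; case: eqP => [->|_]; last by rewrite scale0r.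
by rewrite -{1}[U_(i)%MM]add0m addmK mpolyX0 scale1r.
Qed.

Section Shift.
Variables (k : fieldType) (n : nat).
Local Notation A := {mpoly k[n]}.
Local Notation B := {mpoly A[n]}.

(* In B, the variables 'X_i play the role of y_i and the constants
   ('X_i : A)%:MP that of x_i: embed g = g(y), shift f = f(y - x),
   eval_diag P = P(x; x), and coef_deriv i differentiates the coefficients
   in x_i.  They are locked so that unification never unfolds them. *)
Fact embed_key : unit. Proof. by []. Qed.
Definition embed : {rmorphism A -> B} := locked_with embed_key
  (GRing.RMorphism.clone A B (map_mpoly (@mpolyC n k)) _).
Canonical embed_unlockable := [unlockable of embed].

Fact shift_key : unit. Proof. by []. Qed.
Definition shift : {rmorphism A -> B} := locked_with shift_key
  (GRing.RMorphism.clone A B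
     (mmap (@mpolyC n A \o @mpolyC n k) (fun i => 'X_i - ('X_i : A)%:MP)) _).
Canonical shift_unlockable := [unlockable of shift].

Fact eval_diag_key : unit. Proof. by []. Qed.
Definition eval_diag : {rmorphism B -> A} := locked_with eval_diag_key
  (GRing.RMorphism.clone B A (meval (fun i => 'X_i)) _).
Canonical eval_diag_unlockable := [unlockable of eval_diag].

Fact coef_deriv_key : unit. Proof. by []. Qed.
Definition coef_deriv (i : 'I_n) : {additive B -> B} := locked_with
  coef_deriv_key (GRing.Additive.clone B B (map_mpoly (mderiv i)) _).
Canonical coef_deriv_unlockable i := [unlockable of coef_deriv i].

Lemma embedX m : embed 'X_[m] = 'X_[m].
Proof. by rewrite unlock /= map_mpolyX. Qed.

Lemma embedZ (c : k) g : embed (c *: g) = c%:MP *: embed g.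
Proof. by rewrite unlock /= map_mpolyZ. Qed.

Lemma mderiv_embed i g : (embed g)^`M(i) = embed (g^`M(i)).
Proof.
elim/mpoly_ind_alg: g => [|j|c g IH|f g IHf IHg|f g IHf IHg].
- by rewrite rmorph1 -mpolyC1 !mderivC raddf0.
- by rewrite embedX !mderivXU rmorph_nat.
- by rewrite embedZ [LHS]mderivZ IH mderivZ embedZ.
- by rewrite rmorphD !mderivD IHf IHg rmorphD.
- by rewrite rmorphM !mderivM IHf IHg rmorphD !rmorphM.
Qed.

Lemma shiftXU i : shift 'X_i = 'X_i - ('X_i : A)%:MP.
Proof. by rewrite unlock /= mmapX mmap1U. Qed.

Lemma shiftZ (c : k) f : shift (c *: f) = (c%:MP)%:MP * shift f.
Proof. by rewrite unlock /= mmapZ. Qed.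

Lemma mderiv_shift i f : (shift f)^`M(i) = shift (f^`M(i)).
Proof.
elim/mpoly_ind_alg: f => [|j|c f IH|f g IHf IHg|f g IHf IHg].
- by rewrite rmorph1 -mpolyC1 !mderivC raddf0.
- by rewrite shiftXU mderivB mderivC subr0 !mderivXU rmorph_nat.
- by rewrite shiftZ mderiv_mulC IH mderivZ shiftZ.
- by rewrite rmorphD !mderivD IHf IHg rmorphD.
- by rewrite rmorphM !mderivM IHf IHg rmorphD !rmorphM.
Qed.

Lemma coef_derivC i (a : A) : coef_deriv i a%:MP = (a^`M(i))%:MP.
Proof. by rewrite unlock /= map_mpolyC. Qed.

Lemma coef_derivX i m : coef_deriv i 'X_[m] = 0.
Proof.
apply/mpolyP => l; rewrite unlock /= mcoeff_map_mpoly mcoeffX mcoeff0.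
by case: (m == l); [exact: mderivC i 1 | exact: raddf0].
Qed.

Lemma coef_derivwE i P d : (msize P <= d)%N ->
  coef_deriv i P = \sum_(m : 'X_{1..n < d}) (P@_m)^`M(i) *: 'X_[m].
Proof. by move=> le_Pd; rewrite unlock /= (map_mpolyE _ le_Pd). Qed.

Lemma coef_derivM i P Q :
  coef_deriv i (P * Q) = coef_deriv i P * Q + P * coef_deriv i Q.
Proof.
apply/mpolyP => m; rewrite unlock /= mcoeffD !mcoeffM !mcoeff_map_mpoly mcoeffM.
rewrite raddf_sum -big_split; apply: eq_bigr => l _ /=.
by rewrite !mcoeff_map_mpoly mderivM.
Qed.

Lemma coef_deriv_shift i f : coef_deriv i (shift f) = - shift (f^`M(i)).
Proof.
elim/mpoly_ind_alg: f => [|j|c f IH|f g IHf IHg|f g IHf IHg].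
- by rewrite rmorph1 -mpolyC1 coef_derivC !mderivC mpolyC0 rmorph0 oppr0.
- by rewrite shiftXU raddfB coef_derivX coef_derivC sub0r mderivXU !rmorph_nat.
- rewrite shiftZ coef_derivM coef_derivC mderivC mul0r add0r IH.
  by rewrite mderivZ shiftZ mulrN.
- by rewrite !rmorphD raddfD IHf IHg mderivD rmorphD opprD.
- rewrite rmorphM coef_derivM IHf IHg mderivM rmorphD !rmorphM.
  by rewrite opprD mulNr mulrN.
Qed.

Lemma eval_diagC (a : A) : eval_diag a%:MP = a.
Proof. by rewrite unlock /= mevalC. Qed.

Lemma eval_diagX m : eval_diag 'X_[m] = 'X_[m].
Proof. by rewrite unlock /= mevalX mpolyXE_id. Qed.

Lemma eval_diagwE P d : (msize P <= d)%N ->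
  eval_diag P = \sum_(m : 'X_{1..n < d}) P@_m * 'X_[m].
Proof.
move=> le_Pd; rewrite {1}(mpolywE le_Pd) rmorph_sum; apply: eq_bigr => m _.
by rewrite -mul_mpolyC rmorphM eval_diagC eval_diagX.
Qed.

Lemma eval_diag_shift f : eval_diag (shift f) = (f@_0%MM)%:MP.
Proof.
elim/mpoly_ind_alg: f => [|j|c f IH|f g IHf IHg|f g IHf IHg].
- by rewrite !rmorph1.
- rewrite shiftXU rmorphB eval_diagX eval_diagC subrr.
  by rewrite mcoeffX mnm1_eq0 mpolyC0.
- by rewrite shiftZ rmorphM eval_diagC IH mcoeffZ mpolyCM.
- by rewrite !rmorphD IHf IHg.
- by rewrite !rmorphM IHf IHg.
Qed.

Lemma shiftX m : shift 'X_[m] =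
  \sum_(l : 'X_{1..n < (mdeg m).+1} | (bmnm l <= m)%MM)
     (((-1) ^+ mdeg (m - bmnm l) * (mbinom m l)%:R) *: ('X_[m - bmnm l] : A)) *:
       ('X_[bmnm l] : B).
Proof.
rewrite mpolyXE_id rmorph_prod.
under eq_bigr => i _ do rewrite rmorphXn shiftXU addrC.
rewrite prod_exprDn; apply: eq_bigr => l _.
pose c i : B := ('X_i : A)%:MP.
have sign : \prod_(i < n) (-1 : B) ^+ (m i - l i) = (-1) ^+ mdeg (m - l).
  rewrite prodrXr (mdegE (m - l)); congr (_ ^+ _).
  by apply: eq_bigr => i _; rewrite mnmBE.
have pow_c : \prod_(i < n) c i ^+ (m i - l i) = ('X_[m - l] : A)%:MP.
  rewrite mpolyXE_id rmorph_prod; apply: eq_bigr => i _.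
  by rewrite rmorphXn mnmBE.
transitivity (\prod_(i < n) ((-1) ^+ (m i - l i) * c i ^+ (m i - l i) *
                            'X_i ^+ l i * ('C(m i, l i))%:R)).
  by apply: eq_bigr => i _; rewrite -mulr_natr [in LHS]exprNn.
rewrite !big_split /= sign -natr_prod pow_c -mpolyXE_id -!mul_mpolyC.
rewrite !rmorphM !rmorphXn !rmorphN1 !rmorph_nat -!mulrA; congr (_ * _).
by rewrite [RHS]mulrC -mulrA.
Qed.
End Shift.

Arguments embed {k n}.
Arguments shift {k n}.
Arguments eval_diag {k n}.
Arguments coef_deriv {k n}.

Section VectorFields.
Variables (k : fieldType) (n : nat).
Local Notation A := {mpoly k[n]}.
Local Notation V := (vfield k n).

Definition vfd (p : 'I_n) (g : A) : V := [ffun i => if i == p then g else 0].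

Lemma vfd_is_linear p : linear (vfd p).
Proof.
move=> c g h; apply/ffunP => i; rewrite !ffunE.
by case: eqP; rewrite ?scaler0 ?addr0.
Qed.
HB.instance Definition _ p :=
  GRing.isLinear.Build k A V _ (vfd p) (vfd_is_linear p).

Lemma vact_vfd p g f : vact (vfd p g) f = g * f^`M(p).
Proof.
rewrite /vact (bigD1 p) //= ffunE eqxx big1 ?addr0 // => j /negbTE ne_jp.
by rewrite ffunE ne_jp mul0r.
Qed.

Lemma vbracket_vfd p q g h :
  vbracket (vfd p g) (vfd q h) = vfd q (g * h^`M(p)) - vfd p (h * g^`M(q)).
Proof.
apply/ffunP => i; rewrite ffunE !vact_vfd !ffunE.
by case: (i == q); case: (i == p); rewrite ?mderiv0 ?mulr0 ?subr0 ?sub0r.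
Qed.

Lemma Lplus_xd (m : 'X_{1..n}) p : m != 0%MM -> Lplus (xd k m p).
Proof.
move=> m0 i; rewrite ffunE; case: eqP => _; rewrite ?mcoeff0 //.
by rewrite mcoeffX (negbTE m0).
Qed.

End VectorFields.

Section SmashProduct.
Variables (k : fieldType) (n : nat).
Local Notation A := {mpoly k[n]}.
Local Notation B := {mpoly A[n]}.
Local Notation V := (vfield k n).
Variables (T : algType k) (iA : A -> T) (iV : V -> T).
Hypothesis smashT : smash_rel iA iV.

Lemma smash_iA_linear : linear iA.
Proof. by case: smashT => -[iAD _ _ iAZ] _ _ _ c f g; rewrite iAD iAZ. Qed.

Lemma smash_iA_monoid : monoid_morphism iA.
Proof. by case: smashT => -[]. Qed.
HB.instance Definition _ := GRing.isLinear.Build k A T _ iA smash_iA_linear.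
HB.instance Definition _ := GRing.isMonoidMorphism.Build A T iA smash_iA_monoid.

Lemma smash_iV_linear : linear iV.
Proof. by case: smashT => _ iVL _ _ c u v; rewrite iVL. Qed.
HB.instance Definition _ := GRing.isLinear.Build k V T _ iV smash_iV_linear.

Lemma iA_comm f g : iA f * iA g = iA g * iA f.
Proof. by rewrite -!rmorphM mulrC. Qed.

Lemma iV_iA u f : iV u * iA f = iA f * iV u + iA (vact u f).
Proof. by case: smashT. Qed.

Lemma iV_bracket u v : iV (vbracket u v) = iV u * iV v - iV v * iV u.
Proof. by case: smashT. Qed.

Lemma smash_commutator a b u w :
  iA a * iV u * (iA b * iV w) - iA b * iV w * (iA a * iV u) =
  iA (a * b) * iV (vbracket u w) + iA (a * vact u b) * iV w
  - iA (b * vact w a) * iV u.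
Proof.
have move_iV c d x y : iA c * iV x * (iA d * iV y) =
    iA (c * d) * (iV x * iV y) + iA (c * vact x d) * iV y.
  by rewrite mulrA -(mulrA _ (iV x)) iV_iA mulrDr mulrDl !mulrA -!rmorphM.
rewrite !move_iV iV_bracket [b * a]mulrC mulrBr.
by rewrite opprD addrACA addrA.
Qed.

Fact smash_vfield_key : unit. Proof. by []. Qed.
Definition smash_vfield (q : 'I_n) (P : B) : T := locked_with smash_vfield_key
  (\sum_(m <- msupp P) iA P@_m * iV (vfd q 'X_[m])).
Canonical smash_vfield_unlockable q P := [unlockable of smash_vfield q P].

Lemma smash_vfieldE q P d : (msize P <= d)%N ->
  smash_vfield q P = \sum_(m : 'X_{1..n < d}) iA P@_m * iV (vfd q 'X_[m]).
Proof.
move=> le_Pd; rewrite unlock (big_mksub 'X_{1..n < d}) ?msupp_uniq //=.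
  by rewrite big_rmcond //= => m /memN_msupp_eq0 ->; rewrite raddf0 mul0r.
by move=> m /msize_mdeg_lt /leq_trans; apply.
Qed.

Lemma smash_vfield_is_additive q : zmod_morphism (smash_vfield q).
Proof.
move=> P Q; pose d := maxn (msize P) (msize Q).
have le_P : (msize P <= d)%N := leq_maxl _ _.
have le_Q : (msize Q <= d)%N := leq_maxr _ _.
have le_PQ : (msize (P - Q) <= d)%N.
  by rewrite (leq_trans (msizeD_le _ _)) // msizeN geq_max le_P.
rewrite !(@smash_vfieldE q _ d) // -sumrB; apply: eq_bigr => m _.
by rewrite raddfB /= raddfB mulrBl.
Qed.
HB.instance Definition _ q :=
  GRing.isZmodMorphism.Build B T (smash_vfield q) (smash_vfield_is_additive q).

Lemma smash_vfieldZ q a P : smash_vfield q (a *: P) = iA a * smash_vfield q P.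
Proof.
rewrite !(@smash_vfieldE q _ (msize P)) ?msizeZ_le // mulr_sumr.
by apply: eq_bigr => m _; rewrite mcoeffZ rmorphM mulrA.
Qed.

Lemma smash_vfield_monomial q a m :
  smash_vfield q (a *: 'X_[m]) = iA a * iV (vfd q 'X_[m]).
Proof.
by rewrite smash_vfieldZ unlock msuppX big_seq1 mcoeffX eqxx rmorph1 mul1r.
Qed.

Lemma smash_vfield_embed q a g :
  smash_vfield q (a *: embed g) = iA a * iV (vfd q g).
Proof.
rewrite [g in LHS]mpolyE [g in RHS]mpolyE rmorph_sum scaler_sumr.
rewrite !raddf_sum /= mulr_sumr.
apply: eq_bigr => m _; rewrite embedZ embedX scalerA smash_vfield_monomial.
by rewrite mulrC mul_mpolyC !linearZ /= -scalerAl -scalerAr.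
Qed.

Lemma smash_vfield_iA q P f :
  smash_vfield q P * iA f =
  iA f * smash_vfield q P + iA (eval_diag P * f^`M(q)).
Proof.
rewrite (smash_vfieldE q (leqnn (msize P))) (eval_diagwE (leqnn (msize P))).
rewrite mulr_suml mulr_sumr mulr_suml raddf_sum -big_split.
apply: eq_bigr => m _.
rewrite -mulrA iV_iA vact_vfd mulrDr mulrA iA_comm -mulrA -rmorphM.
by rewrite /= !mulrA.
Qed.

Lemma smash_vfield_mul_deriv p q a b l l' :
  smash_vfield q ((a *: 'X_[l]) * (b *: 'X_[l'])^`M(p)) =
  iA (a * b) * iV (vfd q ('X_[l] * 'X_[l']^`M(p))).
Proof.
rewrite mderivZ -scalerAl -scalerAr scalerA -!embedX mderiv_embed -rmorphM.
exact: smash_vfield_embed.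
Qed.

Lemma smash_vfield_commutator p q P Q :
  smash_vfield p P * smash_vfield q Q - smash_vfield q Q * smash_vfield p P =
  smash_vfield q (P * Q^`M(p)) - smash_vfield p (Q * P^`M(q))
  + smash_vfield q (eval_diag P *: coef_deriv p Q)
  - smash_vfield p (eval_diag Q *: coef_deriv q P).
Proof.
pose d := maxn (msize P) (msize Q).
have le_P : (msize P <= d)%N := leq_maxl _ _.
have le_Q : (msize Q <= d)%N := leq_maxr _ _.
rewrite (smash_vfieldE p le_P) (smash_vfieldE q le_Q) sum_commutator.
under eq_bigr => l _ do under eq_bigr => l' _ do
  rewrite smash_commutator vbracket_vfd raddfB /= mulrBr.
under eq_bigr => l _ do rewrite sumrB big_split sumrB /=.
rewrite sumrB big_split sumrB /=.
have eP := mpolywE le_P; have eQ := mpolywE le_Q.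
congr (_ - _ + _ - _).
- rewrite {2}eP {2}eQ raddf_sum mulr_suml raddf_sum; apply: eq_bigr => l _.
  rewrite mulr_sumr raddf_sum; apply: eq_bigr => l' _.
  by rewrite /= smash_vfield_mul_deriv.
- rewrite {2}eP {2}eQ raddf_sum mulr_suml raddf_sum exchange_big /=.
  apply: eq_bigr => l _; rewrite mulr_sumr raddf_sum; apply: eq_bigr => l' _.
  by rewrite /= smash_vfield_mul_deriv mulrC.
- rewrite (coef_derivwE p le_Q) scaler_sumr raddf_sum exchange_big /=.
  apply: eq_bigr => l' _; rewrite /= scalerA smash_vfield_monomial.
  rewrite (eval_diagwE le_P) mulr_suml raddf_sum mulr_suml.
  by apply: eq_bigr => l _; rewrite /= vact_vfd mulrA.
- rewrite (coef_derivwE q le_P) scaler_sumr raddf_sum.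
  apply: eq_bigr => l _; rewrite /= scalerA smash_vfield_monomial.
  rewrite (eval_diagwE le_Q) mulr_suml raddf_sum mulr_suml.
  by apply: eq_bigr => l' _; rewrite /= vact_vfd mulrA.
Qed.

Lemma smash_vfield1_commutator p q P :
  smash_vfield p 1 * smash_vfield q P - smash_vfield q P * smash_vfield p 1 =
  smash_vfield q (P^`M(p) + coef_deriv p P).
Proof.
have d1 : (1 : B)^`M(q) = 0 by rewrite -mpolyC1 mderivC.
have c1 : coef_deriv q (1 : B) = 0.
  by rewrite -mpolyC1 coef_derivC -mpolyC1 mderivC mpolyC0.
(* Unrestricted, these rewrites would try to unify 1 with P under mderiv. *)
rewrite smash_vfield_commutator mul1r [in P * _]d1 [in eval_diag P *: _]c1.
by rewrite mulr0 scaler0 rmorph1 scale1r !raddf0 !addr0 -raddfD.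
Qed.

Definition psi (u : V) : T := \sum_(q < n) smash_vfield q (shift (u q)).

Lemma psi_linear (a : k) u v : psi (a *: u + v) = a *: psi u + psi v.
Proof.
rewrite /psi scaler_sumr -big_split; apply: eq_bigr => q _.
rewrite !ffunE rmorphD raddfD /= shiftZ mul_mpolyC smash_vfieldZ.
by rewrite -alg_mpolyC linearZ rmorph1 mulr_algl.
Qed.

Lemma psi_iA_comm u f : Lplus u -> psi u * iA f = iA f * psi u.
Proof.
move=> u0; rewrite /psi mulr_suml mulr_sumr; apply: eq_bigr => q _.
by rewrite smash_vfield_iA eval_diag_shift u0 mpolyC0 mul0r raddf0 addr0.
Qed.

Lemma psi_bracket u v : Lplus u -> Lplus v ->
  psi (vbracket u v) = psi u * psi v - psi v * psi u.
Proof.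
move=> u0 v0; apply: esym; rewrite /psi sum_commutator.
under eq_bigr => p _ do under eq_bigr => q _ do
  rewrite smash_vfield_commutator !eval_diag_shift u0 v0 mpolyC0 !scale0r
    !raddf0 !addr0 !mderiv_shift -!rmorphM.
under eq_bigr => p _ do rewrite sumrB.
under [RHS]eq_bigr => q _ do
  rewrite ffunE /vact rmorphB !rmorph_sum raddfB !raddf_sum /= sumrN.
by rewrite !sumrB exchange_big.
Qed.

Lemma dvec_psi_comm i v : iV (dvec k i) * psi v = psi v * iV (dvec k i).
Proof.
have -> : iV (dvec k i) = smash_vfield i 1.
  by rewrite -[1]scale1r -mpolyX0 smash_vfield_monomial rmorph1 mul1r.
apply/eqP; rewrite -subr_eq0 /psi mulr_sumr mulr_suml -sumrB; apply/eqP.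
apply: big1 => q _.
by rewrite smash_vfield1_commutator mderiv_shift coef_deriv_shift subrr raddf0.
Qed.

Lemma psi_xd m p : psi (xd k m p) = psiL iA iV m p.
Proof.
rewrite /psi (bigD1 p) //= big1 ?addr0; last first.
  by move=> q /negbTE ne_qp; rewrite ffunE ne_qp rmorph0 raddf0.
rewrite ffunE eqxx shiftX raddf_sum; apply: eq_bigr => l _.
by rewrite /= smash_vfield_monomial linearZ -scalerAl.
Qed.

Lemma iA_mpolyX m : iA 'X_[m] = \prod_(i < n) iA 'X_i ^+ m i.
Proof.
by rewrite mpolyXE_id rmorph_prod; apply: eq_bigr => i _; rewrite rmorphXn.
Qed.

Lemma smash_DUL_rel :
  DUL_rel (fun i => iA 'X_i) (fun i => iV (dvec k i)) psi.
Proof.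
have dvecE (i : 'I_n) : dvec k i = vfd i 1 by rewrite /dvec /xd mpolyX0.
split; [split | | | |] => //.
- by move=> i l; rewrite iA_comm.
- move=> i l; apply/eqP; rewrite -subr_eq0 -iV_bracket !dvecE vbracket_vfd.
  by rewrite -mpolyC1 !mderivC !mulr0 !raddf0 addr0 raddf0.
- move=> i l; rewrite iV_iA dvecE vact_vfd mul1r mderivXU addrC addKr.
  by rewrite rmorph_nat eq_sym.
- by move=> a u v _ _; rewrite psi_linear.
- by move=> u v u0 v0; rewrite psi_bracket.
- by move=> i u u0; rewrite psi_iA_comm.
- by move=> i u _; rewrite dvec_psi_comm.
Qed.

End SmashProduct.

Section AlgHom.
Variables (k : fieldType) (S T : algType k) (phi : S -> T).
Hypothesis phi_hom : is_alg_hom phi.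

Lemma alg_hom_prod (I : Type) (r : seq I) (P : pred I) (F : I -> S) :
  phi (\prod_(i <- r | P i) F i) = \prod_(i <- r | P i) phi (F i).
Proof. by case: phi_hom => _ phiM phi1 _; apply: big_morph. Qed.

Lemma alg_homX x e : phi (x ^+ e) = phi x ^+ e.
Proof.
case: phi_hom => _ phiM phi1 _.
by elim: e => [|e IHe]; rewrite ?expr0 // !exprS phiM IHe.
Qed.

End AlgHom.

Theorem lemma3p4 (k : closedFieldType) (n : nat) (chark : [pchar k] =i pred0)
    (S : algType k) (X Dd : 'I_n -> S) (j : vfield k n -> S)
    (HS : is_DUL X Dd j)
    (T : algType k) (iA : {mpoly k[n]} -> T) (iV : vfield k n -> T)
    (HT : is_smash iA iV) :
  exists phi : S -> T,
    [/\ is_alg_hom phi,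
        (forall r s : 'X_{1..n},
           phi ((\prod_(i < n) X i ^+ r i) * (\prod_(i < n) Dd i ^+ s i))
           = iA 'X_[r] * (\prod_(i < n) iV (dvec k i) ^+ s i))
      & (forall (m : 'X_{1..n}) (p : 'I_n), m != 0%MM ->
           phi (j (xd k m p)) = psiL iA iV m p)].
Proof.
have [smashT _] := HT; have [_ univS] := HS.
have [phi [phi_hom phiX phiD phij _]] := univS T _ _ _ (smash_DUL_rel smashT).
exists phi; split => // [r s | m p m0].
  case: (phi_hom) => _ phiM _ _.
  have -> : iA 'X_[r] = \prod_(i < n) iA 'X_i ^+ r i := iA_mpolyX smashT r.
  rewrite phiM !(alg_hom_prod phi_hom).
  congr (_ * _); apply: eq_bigr => i _.
  - by rewrite (alg_homX phi_hom) phiX.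
  - by rewrite (alg_homX phi_hom) phiD.
by rewrite phij; [exact: psi_xd | exact: Lplus_xd].
Qed.
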